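(* Let $\alpha\in(0,1)$ and let $\phi:[0,1]\to[0,\infty)$ be four times continuously differentiable on $(0,1]$ with finite constants $W>0$, $c$, $c'$ such that $(2-\alpha)(3-\alpha)(4-\alpha)Wp^{\alpha-4}+c'\le|\phi^{(4)}(p)|\le(2-\alpha)(3-\alpha)(4-\alpha)Wp^{\alpha-4}+c$ for all $p\in(0,1]$. Let $n\ge1$, and $\Delta,p$ with $\frac1n\lesssim\Delta<p\le1$, and let $\tilde N\sim\mathrm{Poisson}(np)$. Then $$\mathrm{Bias}\Big[\bar\phi_\Delta\Big(\frac{\tilde N}{n}\Big)-\frac{\tilde N}{2n^2}\bar\phi_\Delta^{(2)}\Big(\frac{\tilde N}{n}\Big)-\phi(p)\Big]\lesssim\frac{1}{n^2\Delta^{2-\alpha}}+\frac{p}{n^2}.$$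
   Context: For the Bernstein basis $B_{\nu,N}(t)=\binom N\nu t^\nu(1-t)^{N-\nu}$ define $H_L(x;\phi,a,b)=\phi(a)+\sum_{m=1}^L\frac{\phi^{(m)}(a)}{m!}(x-a)^m\sum_{\ell=0}^{L-m}\frac{L+1}{L+\ell+1}B_{\ell,L+\ell+1}\big(\tfrac{x-a}{b-a}\big)$ (derivatives at $1$ are one-sided). For $\Delta\in(0,1]$, $\bar\phi_\Delta:[0,\infty)\to\mathbb{R}$ is $\bar\phi_\Delta(x)=H_4(\Delta/2;\phi,\Delta,\Delta/2)$ if $x\le\Delta/2$; $H_4(x;\phi,\Delta,\Delta/2)$ if $\Delta/2<x<\Delta$; $\phi(x)$ if $\Delta\le x\le1$; $H_4(x;\phi,1,2)$ if $1<x<2$; $H_4(2;\phi,1,2)$ if $x\ge2$; $\bar\phi^{(2)}_\Delta$ is its second derivative. For a random variable $Y$, $\mathrm{Bias}[Y]=|\mathbb{E}[Y]|$. $a\lesssim b$ means $a\le Cb$ for a positive constant $C$ not depending on $n,\Delta,p$ (possibly on $\phi,\alpha$); $\frac1n\lesssim\Delta$ means $\Delta\ge c_0/n$ for a fixed constant $c_0>0$. *)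

From Stdlib Require Import Reals Lra.
From Coquelicot Require Import Coquelicot.
Open Scope R_scope.

Definition bernstein (nu N : nat) (t : R) : R :=
  Binomial.C N nu * t ^ nu * (1 - t) ^ (N - nu).

Definition I01 (x : R) : Prop := 0 < x <= 1.

Definition is_derive_I01 (f : R -> R) (x l : R) : Prop :=
  filterlim (fun y => (f y - f x) / (y - x))
    (within (fun y => I01 y /\ y <> x) (locally x)) (locally l).

Definition C4_derivs_I01 (phi : R -> R) (D : nat -> R -> R) : Prop :=
  (forall x, I01 x -> is_derive_I01 phi x (D 1%nat x)) /\
  (forall k x, (1 <= k <= 3)%nat -> I01 x -> is_derive_I01 (D k) x (D (S k) x)) /\
  (forall x, I01 x -> filterlim (D 4%nat) (within I01 (locally x)) (locally (D 4%nat x))).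

(* H_L(x; phi, a, b), with phi^{(m)}(a) = D m a for m >= 1. *)
Definition H (L : nat) (phi : R -> R) (D : nat -> R -> R) (a b x : R) : R :=
  phi a + sum_n_m (fun m =>
     D m a / INR (Factorial.fact m) * (x - a) ^ m *
     sum_n_m (fun l => INR (L + 1) / INR (L + l + 1) *
                       bernstein l (L + l + 1) ((x - a) / (b - a)))
             0 (L - m)) 1 L.

(* bar phi_Delta (defined on [0,oo); for x < 0 we extend by the constant of
   the first branch, which is irrelevant for x >= 0 values and makes the
   second derivative at 0 the one-sided one). *)
Definition phibar (phi : R -> R) (D : nat -> R -> R) (Delta x : R) : R :=
  if Rle_dec x (Delta / 2) then H 4 phi D Delta (Delta / 2) (Delta / 2)
  else if Rlt_dec x Delta then H 4 phi D Delta (Delta / 2) x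
  else if Rle_dec x 1 then phi x
  else if Rlt_dec x 2 then H 4 phi D 1 2 x
  else H 4 phi D 1 2 2.

Definition poisson_pmf (lam : R) (k : nat) : R :=
  exp (- lam) * lam ^ k / INR (Factorial.fact k).

(* The random quantity inside the bias, as a function of N~ = k. *)
Definition estimator_err (phi : R -> R) (D : nat -> R -> R) (n : nat)
    (Delta p : R) (k : nat) : R :=
  phibar phi D Delta (INR k / INR n)
  - INR k / (2 * INR n ^ 2) * Derive_n (phibar phi D Delta) 2 (INR k / INR n)
  - phi p.

(* Write X = N~/n and lam = n p.  The derivatives of phibar are glued from those of phi
   and of the two Hermite-type interpolants H_4, which match phi's derivatives up to
   order four at Delta and 1 and are flat at Delta/2 and 2; so phibar is four times
   differentiable on the whole line, and Taylor's formula at p applies to it.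
   Integrating |phi''''(x)| <= C x^(alpha-4) three times gives |phi^(k)(x)| <= C x^(alpha-k)
   on (0,1], hence |phibar^(k)| <= C Delta^(alpha-k) on [0,1] and
   |phibar''''| <= C p^(alpha-4) on [p/2, oo).
   Expanding phibar(X) - X/(2n) phibar''(X) - phi(p) to third order at p leaves a cubic in
   N~ - lam, whose Poisson mean is exactly -phi'''(p) p / (3 n^2), plus Taylor remainders.
   For X >= p/2 these are O(phibar'''' (X - p)^4); for X < p/2 one has |X - p| >= p/2 and
   cruder bounds are enough.  The Poisson central moments lam and 3 lam^2 + lam, together
   with lam >= c0, then bound everything by C Delta^(alpha-2) / n^2. *)

From Stdlib Require Import Reals Lra Lia.
From Coquelicot Require Import Coquelicot.
Open Scope R_scope.

Lemma poisson_pmf_nonneg lam k : 0 <= lam -> 0 <= poisson_pmf lam k.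
Proof.
  intros hlam. unfold poisson_pmf. apply Rdiv_le_0_compat.
  - apply Rmult_le_pos; [left; apply exp_pos | now apply pow_le].
  - apply INR_fact_lt_0.
Qed.

Lemma is_series_poisson_pmf lam : is_series (poisson_pmf lam) 1.
Proof.
  replace 1 with (exp (- lam) * exp lam)
    by (rewrite <- exp_plus; replace (- lam + lam) with 0 by ring; apply exp_0).
  refine (is_series_ext _ _ _ _ (is_series_scal_l (exp (- lam)) _ _ (is_exp_Reals lam))).
  intros k. unfold poisson_pmf. rewrite pow_n_pow.
  unfold scal; simpl; unfold mult; simpl. field. apply INR_fact_neq_0.
Qed.

Lemma poisson_pmf_succ lam k : poisson_pmf lam (S k) * INR (S k) = lam * poisson_pmf lam k.
Proof.
  unfold poisson_pmf. rewrite fact_simpl, mult_INR. simpl pow.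
  field. split; [apply INR_fact_neq_0 | apply not_0_INR; lia].
Qed.

Fixpoint falling (r : nat) (x : R) : R :=
  match r with O => 1 | S r => x * falling r (x - 1) end.

Lemma is_series_poisson_falling lam r :
  is_series (fun k => poisson_pmf lam k * falling r (INR k)) (lam ^ r).
Proof.
  induction r as [|r IH].
  - refine (is_series_ext _ _ _ _ (is_series_poisson_pmf lam)). intros k; simpl; ring.
  - apply is_series_decr_1.
    replace (plus _ _) with (lam * lam ^ r) by (unfold plus, opp; simpl; ring).
    refine (is_series_ext _ _ _ _ (is_series_scal_l lam _ _ IH)).
    intros k.
    change (lam * (poisson_pmf lam k * falling r (INR k))
            = poisson_pmf lam (S k) * (INR (S k) * falling r (INR (S k) - 1))).
    replace (INR (S k) - 1) with (INR k) by (rewrite S_INR; ring).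
    rewrite <- (Rmult_assoc (poisson_pmf lam (S k))), poisson_pmf_succ. ring.
Qed.

(* The coefficients are Stirling numbers of the second kind, expressing [k ^ j] through
   the falling factorials [falling i k]. *)
Lemma is_series_poisson_poly4 lam a0 a1 a2 a3 a4 :
  is_series (fun k => poisson_pmf lam k *
     (a0 + a1 * INR k + a2 * INR k ^ 2 + a3 * INR k ^ 3 + a4 * INR k ^ 4))
   (a0 + (a1 + a2 + a3 + a4) * lam + (a2 + 3 * a3 + 7 * a4) * lam ^ 2
      + (a3 + 6 * a4) * lam ^ 3 + a4 * lam ^ 4).
Proof.
  pose proof (Hcomb :=
    is_series_plus _ _ _ _ (is_series_scal_l a0 _ _ (is_series_poisson_falling lam 0))
    (is_series_plus _ _ _ _ (is_series_scal_l (a1 + a2 + a3 + a4) _ _ (is_series_poisson_falling lam 1))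
    (is_series_plus _ _ _ _ (is_series_scal_l (a2 + 3 * a3 + 7 * a4) _ _ (is_series_poisson_falling lam 2))
    (is_series_plus _ _ _ _ (is_series_scal_l (a3 + 6 * a4) _ _ (is_series_poisson_falling lam 3))
      (is_series_scal_l a4 _ _ (is_series_poisson_falling lam 4)))))).
  match type of Hcomb with is_series _ ?v =>
    replace (_ + _ * lam + _ * lam ^ 2 + _ * lam ^ 3 + _) with v
      by (unfold plus, scal; simpl; unfold mult; simpl; ring) end.
  refine (is_series_ext _ _ _ _ Hcomb).
  intros k. unfold plus, scal; simpl; unfold mult; simpl. ring.
Qed.

Lemma is_series_poisson_central lam b0 b1 b2 b3 b4 :
  is_series (fun k => poisson_pmf lam k *
     (b0 + b1 * (INR k - lam) + b2 * (INR k - lam) ^ 2 + b3 * (INR k - lam) ^ 3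
        + b4 * (INR k - lam) ^ 4))
   (b0 + b2 * lam + b3 * lam + b4 * (3 * lam ^ 2 + lam)).
Proof.
  pose proof (is_series_poisson_poly4 lam
    (b0 - lam * b1 + lam ^ 2 * b2 - lam ^ 3 * b3 + lam ^ 4 * b4)
    (b1 - 2 * lam * b2 + 3 * lam ^ 2 * b3 - 4 * lam ^ 3 * b4)
    (b2 - 3 * lam * b3 + 6 * lam ^ 2 * b4)
    (b3 - 4 * lam * b4) b4) as H.
  match type of H with is_series _ ?v =>
    replace (b0 + b2 * lam + b3 * lam + b4 * (3 * lam ^ 2 + lam)) with v by (simpl; ring) end.
  refine (is_series_ext _ _ _ _ H). intros k. simpl. ring.
Qed.

Lemma series_approx_bound (w f P B : nat -> R) (mP mB : R) :
  (forall k, 0 <= w k) ->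
  is_series (fun k => w k * P k) mP -> is_series (fun k => w k * B k) mB ->
  (forall k, Rabs (f k - P k) <= B k) ->
  ex_series (fun k => w k * f k) /\ Rabs (Series (fun k => w k * f k)) <= Rabs mP + mB.
Proof.
  intros hw HP HB Hf.
  assert (Hd : forall k, Rabs (w k * (f k - P k)) <= w k * B k).
  { intros k. rewrite Rabs_mult, (Rabs_pos_eq (w k)) by apply hw.
    apply Rmult_le_compat_l; [apply hw | apply Hf]. }
  assert (ExB : ex_series (fun k => w k * B k)) by (eexists; exact HB).
  assert (ExD : ex_series (fun k => Rabs (w k * (f k - P k)))).
  { apply (@ex_series_le R_AbsRing R_CompleteNormedModule _ (fun k => w k * B k)); [| exact ExB].
    intros k. unfold norm; simpl. rewrite Rabs_Rabsolu. apply Hd. }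
  assert (Edecomp : forall k, w k * P k + w k * (f k - P k) = w k * f k) by (intros; ring).
  assert (Ex : ex_series (fun k => w k * f k)).
  { apply (ex_series_ext _ _ Edecomp).
    exact (ex_series_plus (fun k => w k * P k) _ (ex_intro _ _ HP) (ex_series_Rabs _ ExD)). }
  split; [exact Ex |].
  rewrite <- (Series_ext _ _ Edecomp), Series_plus, (is_series_unique _ _ HP);
    [| eexists; exact HP | now apply ex_series_Rabs].
  eapply Rle_trans; [apply Rabs_triang | apply Rplus_le_compat_l].
  eapply Rle_trans; [now apply Series_Rabs |].
  rewrite <- (is_series_unique _ _ HB). apply Series_le; [| exact ExB].
  intros k. split; [apply Rabs_pos | apply Hd].
Qed.

(* [hermite_poly m 0 t] is [t^m * sum_(l <= 4-m) 5/(5+l) B_{l,5+l}(t)] multiplied out, and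
   [hermite_poly m i] is its [i]-th derivative. *)
Definition hermite_poly (m i : nat) (t : R) : R :=
  match m, i with
  | 1%nat, 0%nat => (1) * t ^ 1 + (-70) * t ^ 5 + (224) * t ^ 6 + (-280) * t ^ 7 + (160) * t ^ 8 + (-35) * t ^ 9
  | 1%nat, 1%nat => (1) * t ^ 0 + (-350) * t ^ 4 + (1344) * t ^ 5 + (-1960) * t ^ 6 + (1280) * t ^ 7 + (-315) * t ^ 8
  | 1%nat, 2%nat => (-1400) * t ^ 3 + (6720) * t ^ 4 + (-11760) * t ^ 5 + (8960) * t ^ 6 + (-2520) * t ^ 7
  | 1%nat, 3%nat => (-4200) * t ^ 2 + (26880) * t ^ 3 + (-58800) * t ^ 4 + (53760) * t ^ 5 + (-17640) * t ^ 6
  | 1%nat, 4%nat => (-8400) * t ^ 1 + (80640) * t ^ 2 + (-235200) * t ^ 3 + (268800) * t ^ 4 + (-105840) * t ^ 5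
  | 2%nat, 0%nat => (1) * t ^ 2 + (-35) * t ^ 5 + (105) * t ^ 6 + (-126) * t ^ 7 + (70) * t ^ 8 + (-15) * t ^ 9
  | 2%nat, 1%nat => (2) * t ^ 1 + (-175) * t ^ 4 + (630) * t ^ 5 + (-882) * t ^ 6 + (560) * t ^ 7 + (-135) * t ^ 8
  | 2%nat, 2%nat => (2) * t ^ 0 + (-700) * t ^ 3 + (3150) * t ^ 4 + (-5292) * t ^ 5 + (3920) * t ^ 6 + (-1080) * t ^ 7
  | 2%nat, 3%nat => (-2100) * t ^ 2 + (12600) * t ^ 3 + (-26460) * t ^ 4 + (23520) * t ^ 5 + (-7560) * t ^ 6
  | 2%nat, 4%nat => (-4200) * t ^ 1 + (37800) * t ^ 2 + (-105840) * t ^ 3 + (117600) * t ^ 4 + (-45360) * t ^ 5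
  | 3%nat, 0%nat => (1) * t ^ 3 + (-15) * t ^ 5 + (40) * t ^ 6 + (-45) * t ^ 7 + (24) * t ^ 8 + (-5) * t ^ 9
  | 3%nat, 1%nat => (3) * t ^ 2 + (-75) * t ^ 4 + (240) * t ^ 5 + (-315) * t ^ 6 + (192) * t ^ 7 + (-45) * t ^ 8
  | 3%nat, 2%nat => (6) * t ^ 1 + (-300) * t ^ 3 + (1200) * t ^ 4 + (-1890) * t ^ 5 + (1344) * t ^ 6 + (-360) * t ^ 7
  | 3%nat, 3%nat => (6) * t ^ 0 + (-900) * t ^ 2 + (4800) * t ^ 3 + (-9450) * t ^ 4 + (8064) * t ^ 5 + (-2520) * t ^ 6
  | 3%nat, 4%nat => (-1800) * t ^ 1 + (14400) * t ^ 2 + (-37800) * t ^ 3 + (40320) * t ^ 4 + (-15120) * t ^ 5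
  | 4%nat, 0%nat => (1) * t ^ 4 + (-5) * t ^ 5 + (10) * t ^ 6 + (-10) * t ^ 7 + (5) * t ^ 8 + (-1) * t ^ 9
  | 4%nat, 1%nat => (4) * t ^ 3 + (-25) * t ^ 4 + (60) * t ^ 5 + (-70) * t ^ 6 + (40) * t ^ 7 + (-9) * t ^ 8
  | 4%nat, 2%nat => (12) * t ^ 2 + (-100) * t ^ 3 + (300) * t ^ 4 + (-420) * t ^ 5 + (280) * t ^ 6 + (-72) * t ^ 7
  | 4%nat, 3%nat => (24) * t ^ 1 + (-300) * t ^ 2 + (1200) * t ^ 3 + (-2100) * t ^ 4 + (1680) * t ^ 5 + (-504) * t ^ 6
  | 4%nat, 4%nat => (24) * t ^ 0 + (-600) * t ^ 1 + (3600) * t ^ 2 + (-8400) * t ^ 3 + (8400) * t ^ 4 + (-3024) * t ^ 5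
  | _, _ => 0
  end.

Lemma is_derive_hermite_poly m i t : (i <= 3)%nat ->
  is_derive (hermite_poly m i) t (hermite_poly m (S i) t).
Proof.
  intros hi.
  destruct m as [|[|[|[|[|m]]]]]; destruct i as [|[|[|[|i]]]]; try lia;
    unfold hermite_poly; auto_derive; auto; ring.
Qed.

Lemma hermite_poly_0 m i : (1 <= m <= 4)%nat -> (i <= 4)%nat ->
  hermite_poly m i 0 = if Nat.eqb m i then INR (Factorial.fact m) else 0.
Proof.
  intros hm hi.
  destruct m as [|[|[|[|[|m]]]]]; destruct i as [|[|[|[|[|i]]]]]; try lia;
    unfold hermite_poly; simpl; ring.
Qed.

Lemma hermite_poly_1 m i : (i <= 4)%nat -> hermite_poly m i 1 = 0.
Proof.
  intros hi.
  destruct m as [|[|[|[|[|m]]]]]; destruct i as [|[|[|[|[|i]]]]]; try lia;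
    unfold hermite_poly; simpl; ring.
Qed.

(* Exceeds the sum of the absolute values of the coefficients of every [hermite_poly m i]. *)
Definition hermite_coef_bound : R := 1000000.

Lemma hermite_poly_bound m i t : 0 <= t <= 1 -> Rabs (hermite_poly m i t) <= hermite_coef_bound.
Proof.
  intros ht.
  assert (pow_01 : forall j, 0 <= t ^ j <= 1).
  { intros j; split; [now apply pow_le | rewrite <- (pow1 j); now apply pow_incr]. }
  pose proof (pow_01 0%nat); pose proof (pow_01 1%nat); pose proof (pow_01 2%nat);
  pose proof (pow_01 3%nat); pose proof (pow_01 4%nat); pose proof (pow_01 5%nat);
  pose proof (pow_01 6%nat); pose proof (pow_01 7%nat); pose proof (pow_01 8%nat);
  pose proof (pow_01 9%nat).
  unfold hermite_coef_bound.
  destruct m as [|[|[|[|[|m]]]]]; destruct i as [|[|[|[|[|i]]]]]; unfold hermite_poly;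
    try (rewrite Rabs_R0; lra); apply Rabs_le; split; lra.
Qed.

Definition hermite_deriv (phi : R -> R) (D : nat -> R -> R) (i : nat) (a b x : R) : R :=
  let t := (x - a) / (b - a) in
  (match i with O => phi a | _ => 0 end) +
  (D 1%nat a * (b - a) ^ 1 * hermite_poly 1 i t
   + D 2%nat a / 2 * (b - a) ^ 2 * hermite_poly 2 i t
   + D 3%nat a / 6 * (b - a) ^ 3 * hermite_poly 3 i t
   + D 4%nat a / 24 * (b - a) ^ 4 * hermite_poly 4 i t) / (b - a) ^ i.

Lemma H_hermite_deriv phi D a b x : b <> a -> H 4 phi D a b x = hermite_deriv phi D 0 a b x.
Proof.
  intros hab.
  assert (C50 : Binomial.C 5 0 = 1)
    by (unfold Binomial.C; cbn [Nat.sub]; rewrite !fact_simpl, !mult_INR; simpl; field).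
  assert (C61 : Binomial.C 6 1 = 6)
    by (unfold Binomial.C; cbn [Nat.sub]; rewrite !fact_simpl, !mult_INR; simpl; field).
  assert (C72 : Binomial.C 7 2 = 21)
    by (unfold Binomial.C; cbn [Nat.sub]; rewrite !fact_simpl, !mult_INR; simpl; field).
  assert (C83 : Binomial.C 8 3 = 56)
    by (unfold Binomial.C; cbn [Nat.sub]; rewrite !fact_simpl, !mult_INR; simpl; field).
  unfold H, hermite_deriv, bernstein.
  repeat (first [rewrite sum_n_m_zero by lia | rewrite sum_Sn_m by lia | progress cbv beta]).
  unfold plus, zero; simpl.
  rewrite C50, C61, C72, C83. field. lra.
Qed.

Lemma is_derive_hermite_deriv phi D i a b x : b <> a -> (i <= 3)%nat ->
  is_derive (hermite_deriv phi D i a b) x (hermite_deriv phi D (S i) a b x).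
Proof.
  intros hab hi.
  assert (DP : forall m t, is_derive (hermite_poly m i) t (hermite_poly m (S i) t))
    by (intros; now apply is_derive_hermite_poly).
  unfold hermite_deriv; cbv zeta.
  replace (match S i with O => phi a | _ => 0 end) with 0 by reflexivity.
  set (c := match i with O => phi a | _ => 0 end).
  set (P := hermite_poly) in *. clearbody P c.
  auto_derive.
  - repeat split; eexists; apply DP.
  - rewrite !(fun m => is_derive_unique _ _ _ (DP m _)).
    change ((x + - a) * / (b - a)) with ((x - a) / (b - a)).
    simpl pow. field. split; [apply pow_nonzero |]; lra.
Qed.

Lemma hermite_deriv_at_a phi D i a b : b <> a -> (i <= 4)%nat ->
  hermite_deriv phi D i a b a = match i with O => phi a | _ => D i a end.
Proof.
  intros hab hi. unfold hermite_deriv.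
  replace ((a - a) / (b - a)) with 0 by (field; lra).
  rewrite !hermite_poly_0 by lia.
  destruct i as [|[|[|[|[|i]]]]]; try lia; simpl; field; lra.
Qed.

Lemma hermite_deriv_at_b phi D i a b : b <> a -> (i <= 4)%nat ->
  hermite_deriv phi D i a b b = match i with O => phi a | _ => 0 end.
Proof.
  intros hab hi. unfold hermite_deriv.
  replace ((b - a) / (b - a)) with 1 by (field; lra).
  rewrite !hermite_poly_1 by lia.
  destruct i as [|[|[|[|[|i]]]]]; try lia; simpl; field; lra.
Qed.

Lemma hermite_deriv_bound phi D i a b x : b <> a -> (1 <= i)%nat ->
  0 <= (x - a) / (b - a) <= 1 ->
  Rabs (hermite_deriv phi D i a b x) <=
  hermite_coef_bound * (Rabs (D 1%nat a) * Rabs (b - a) ^ 1 + Rabs (D 2%nat a) * Rabs (b - a) ^ 2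
       + Rabs (D 3%nat a) * Rabs (b - a) ^ 3 + Rabs (D 4%nat a) * Rabs (b - a) ^ 4)
    / Rabs (b - a) ^ i.
Proof.
  intros hab hi ht. unfold hermite_deriv; cbv zeta.
  destruct i as [|i]; [lia|]. rewrite Rplus_0_l.
  set (t := (x - a) / (b - a)) in *. set (s := b - a).
  assert (hs : 0 < Rabs s) by (apply Rabs_pos_lt; unfold s; lra).
  rewrite Rabs_div by (apply pow_nonzero; unfold s; lra). rewrite <- RPow_abs.
  unfold Rdiv at 1 3. apply Rmult_le_compat_r; [left; apply Rinv_0_lt_compat, pow_lt; lra |].
  assert (term : forall m c, 0 < c <= 1 ->
    Rabs (D m a * c * s ^ m * hermite_poly m (S i) t) <= Rabs (D m a) * Rabs s ^ m * hermite_coef_bound).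
  { intros m c hc. rewrite !Rabs_mult, <- RPow_abs, (Rabs_right c) by lra.
    pose proof (hermite_poly_bound m (S i) t ht).
    pose proof (Rabs_pos (D m a)); pose proof (pow_le _ m (Rabs_pos s)).
    pose proof (Rabs_pos (hermite_poly m (S i) t)).
    apply Rmult_le_compat; [| | | assumption]; try (repeat apply Rmult_le_pos; lra).
    rewrite <- (Rmult_1_r (Rabs (D m a))) at 2.
    apply Rmult_le_compat_r; [| apply Rmult_le_compat_l]; lra. }
  pose proof (term 1%nat 1 ltac:(lra)) as T1; rewrite Rmult_1_r in T1.
  pose proof (term 2%nat (/ 2) ltac:(lra)) as T2.
  pose proof (term 3%nat (/ 6) ltac:(lra)) as T3.
  pose proof (term 4%nat (/ 24) ltac:(lra)) as T4.
  unfold Rdiv in *.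
  set (u1 := D 1%nat a * s ^ 1 * hermite_poly 1 (S i) t) in *.
  set (u2 := D 2%nat a * / 2 * s ^ 2 * hermite_poly 2 (S i) t) in *.
  set (u3 := D 3%nat a * / 6 * s ^ 3 * hermite_poly 3 (S i) t) in *.
  set (u4 := D 4%nat a * / 24 * s ^ 4 * hermite_poly 4 (S i) t) in *.
  pose proof (Rabs_triang (u1 + u2 + u3) u4); pose proof (Rabs_triang (u1 + u2) u3);
  pose proof (Rabs_triang u1 u2). lra.
Qed.

Definition is_left_derive (f : R -> R) (x l : R) : Prop :=
  forall eps, 0 < eps -> exists d, 0 < d /\
    forall h, - d < h < 0 -> Rabs ((f (x + h) - f x) / h - l) < eps.

Definition is_right_derive (f : R -> R) (x l : R) : Prop :=
  forall eps, 0 < eps -> exists d, 0 < d /\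
    forall h, 0 < h < d -> Rabs ((f (x + h) - f x) / h - l) < eps.

Lemma is_derive_left_right_iff f x l :
  is_derive f x l <-> is_left_derive f x l /\ is_right_derive f x l.
Proof.
  rewrite is_derive_Reals. split.
  - intros Hf. split; intros eps heps; destruct (Hf eps heps) as [d Hd];
      exists d; split; [apply cond_pos | | apply cond_pos |];
      intros h hh; apply Hd; try lra; apply Rabs_def1; lra.
  - intros [HL HR] eps heps.
    destruct (HL eps heps) as [d1 [hd1 H1]], (HR eps heps) as [d2 [hd2 H2]].
    exists (mkposreal _ (Rmin_glb_lt _ _ _ hd1 hd2)). simpl. intros h hh0 hh.
    pose proof (Rmin_l d1 d2); pose proof (Rmin_r d1 d2). apply Rabs_def2 in hh.
    destruct (Rlt_or_le h 0); [apply H1 | apply H2]; lra.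
Qed.

Lemma is_left_derive_loc f f' x l d : 0 < d -> (forall y, x - d < y <= x -> f y = f' y) ->
  is_left_derive f' x l -> is_left_derive f x l.
Proof.
  intros hd E H eps heps. destruct (H eps heps) as [d' [hd' Hd']].
  exists (Rmin d' d). split; [now apply Rmin_glb_lt |].
  intros h hh. pose proof (Rmin_l d' d); pose proof (Rmin_r d' d).
  rewrite (E (x + h)), (E x) by lra. apply Hd'. lra.
Qed.

Lemma is_right_derive_loc f f' x l d : 0 < d -> (forall y, x <= y < x + d -> f y = f' y) ->
  is_right_derive f' x l -> is_right_derive f x l.
Proof.
  intros hd E H eps heps. destruct (H eps heps) as [d' [hd' Hd']].
  exists (Rmin d' d). split; [now apply Rmin_glb_lt |].
  intros h hh. pose proof (Rmin_l d' d); pose proof (Rmin_r d' d).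
  rewrite (E (x + h)), (E x) by lra. apply Hd'. lra.
Qed.

Lemma is_derive_I01_near f x l : is_derive_I01 f x l -> forall eps, 0 < eps -> exists d, 0 < d /\
  forall y, Rabs (y - x) < d -> I01 y -> y <> x -> Rabs ((f y - f x) / (y - x) - l) < eps.
Proof.
  intros Hf eps heps.
  destruct (Hf (ball l eps) (locally_ball l (mkposreal _ heps))) as [d Hd].
  exists d. split; [apply cond_pos |]. intros y hy hI hne. now apply Hd.
Qed.

Lemma is_derive_I01_left f x l : 0 < x <= 1 -> is_derive_I01 f x l -> is_left_derive f x l.
Proof.
  intros hx Hf eps heps. destruct (is_derive_I01_near f x l Hf eps heps) as [d [hd Hd]].
  exists (Rmin d x). split; [apply Rmin_glb_lt; lra |].
  intros h hh. pose proof (Rmin_l d x); pose proof (Rmin_r d x).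
  replace h with ((x + h) - x) at 2 by ring.
  apply Hd; [replace (x + h - x) with h by ring; apply Rabs_def1 | unfold I01 |]; lra.
Qed.

Lemma is_derive_I01_right f x l : 0 < x < 1 -> is_derive_I01 f x l -> is_right_derive f x l.
Proof.
  intros hx Hf eps heps. destruct (is_derive_I01_near f x l Hf eps heps) as [d [hd Hd]].
  exists (Rmin d (1 - x)). split; [apply Rmin_glb_lt; lra |].
  intros h hh. pose proof (Rmin_l d (1 - x)); pose proof (Rmin_r d (1 - x)).
  replace h with ((x + h) - x) at 2 by ring.
  apply Hd; [replace (x + h - x) with h by ring; apply Rabs_def1 | unfold I01 |]; lra.
Qed.

Definition phi_deriv (phi : R -> R) (D : nat -> R -> R) (i : nat) : R -> R :=
  match i with O => phi | _ => D i end.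

Definition const_deriv (c : R) (i : nat) : R := match i with O => c | _ => 0 end.

Definition phibar_deriv (phi : R -> R) (D : nat -> R -> R) (Dl : R) (i : nat) (x : R) : R :=
  if Rle_dec x (Dl / 2) then const_deriv (hermite_deriv phi D 0 Dl (Dl / 2) (Dl / 2)) i
  else if Rlt_dec x Dl then hermite_deriv phi D i Dl (Dl / 2) x
  else if Rle_dec x 1 then phi_deriv phi D i x
  else if Rlt_dec x 2 then hermite_deriv phi D i 1 2 x
  else const_deriv (hermite_deriv phi D 0 1 2 2) i.

Lemma is_derive_const_deriv c i x :
  is_derive (fun _ => const_deriv c i) x (const_deriv c (S i)).
Proof. exact (is_derive_const _ _). Qed.

Section PhibarDerivatives.

Variables (phi : R -> R) (D : nat -> R -> R) (Dl : R).
Hypothesis hDl : 0 < Dl < 1.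

Let g := phibar_deriv phi D Dl.

Lemma phibar_phibar_deriv x : phibar phi D Dl x = g 0 x.
Proof. unfold g, phibar, phibar_deriv, const_deriv. now rewrite !H_hermite_deriv by lra. Qed.

Lemma phibar_deriv_le_half i y : y <= Dl / 2 ->
  g i y = const_deriv (hermite_deriv phi D 0 Dl (Dl / 2) (Dl / 2)) i.
Proof. intros. unfold g, phibar_deriv. destruct (Rle_dec y (Dl / 2)); [auto | lra]. Qed.

Lemma phibar_deriv_lower i y : Dl / 2 <= y <= Dl -> (i <= 4)%nat ->
  g i y = hermite_deriv phi D i Dl (Dl / 2) y.
Proof.
  intros hy hi. unfold g, phibar_deriv. destruct (Rle_dec y (Dl / 2)).
  - replace y with (Dl / 2) by lra.
    rewrite !hermite_deriv_at_b by (lra || lia). now destruct i.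
  - destruct (Rlt_dec y Dl); [reflexivity |]. replace y with Dl by lra.
    destruct (Rle_dec Dl 1); [| lra].
    rewrite !hermite_deriv_at_a by (lra || lia). now destruct i.
Qed.

Lemma phibar_deriv_mid i y : Dl <= y <= 1 -> g i y = phi_deriv phi D i y.
Proof.
  intros hy. unfold g, phibar_deriv. destruct (Rle_dec y (Dl / 2)); [lra |].
  destruct (Rlt_dec y Dl); [lra |]. destruct (Rle_dec y 1); [auto | lra].
Qed.

Lemma phibar_deriv_upper i y : 1 <= y <= 2 -> (i <= 4)%nat ->
  g i y = hermite_deriv phi D i 1 2 y.
Proof.
  intros hy hi. unfold g, phibar_deriv. destruct (Rle_dec y (Dl / 2)); [lra |].
  destruct (Rlt_dec y Dl); [lra |]. destruct (Rle_dec y 1).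
  - replace y with 1 by lra. rewrite !hermite_deriv_at_a by (lra || lia). now destruct i.
  - destruct (Rlt_dec y 2); [reflexivity |]. replace y with 2 by lra.
    rewrite !hermite_deriv_at_b by (lra || lia). now destruct i.
Qed.

Lemma phibar_deriv_ge2 i y : 2 <= y -> g i y = const_deriv (hermite_deriv phi D 0 1 2 2) i.
Proof.
  intros hy. unfold g, phibar_deriv. destruct (Rle_dec y (Dl / 2)); [lra |].
  destruct (Rlt_dec y Dl); [lra |]. destruct (Rle_dec y 1); [lra |].
  destruct (Rlt_dec y 2); [lra | reflexivity].
Qed.

Hypothesis phi_deriv_I01 : forall i x, (i <= 3)%nat -> I01 x ->
  is_derive_I01 (phi_deriv phi D i) x (phi_deriv phi D (S i) x).

(* On each closed piece [g i] coincides with a function differentiable there, and the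
   pieces agree to order 4 at the knots. *)
Lemma is_left_derive_phibar_deriv i x : (i <= 3)%nat -> is_left_derive (g i) x (g (S i) x).
Proof.
  intros hi.
  destruct (Rle_lt_dec x (Dl / 2)) as [h1 | h1]; [| destruct (Rle_lt_dec x Dl) as [h2 | h2]];
    [| | destruct (Rle_lt_dec x 1) as [h3 | h3]; [| destruct (Rle_lt_dec x 2) as [h4 | h4]]].
  - rewrite phibar_deriv_le_half by lra.
    apply (is_left_derive_loc _ _ x _ 1 Rlt_0_1 (fun y hy => phibar_deriv_le_half i y ltac:(lra))).
    apply is_derive_left_right_iff, is_derive_const_deriv.
  - rewrite phibar_deriv_lower by (lra || lia).
    apply (is_left_derive_loc _ _ x _ (x - Dl / 2) ltac:(lra)
             (fun y hy => phibar_deriv_lower i y ltac:(lra) ltac:(lia))).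
    apply is_derive_left_right_iff, is_derive_hermite_deriv; (lra || lia).
  - rewrite phibar_deriv_mid by lra.
    apply (is_left_derive_loc _ _ x _ (x - Dl) ltac:(lra) (fun y hy => phibar_deriv_mid i y ltac:(lra))).
    apply is_derive_I01_left; [lra | apply phi_deriv_I01; [lia | unfold I01; lra]].
  - rewrite phibar_deriv_upper by (lra || lia).
    apply (is_left_derive_loc _ _ x _ (x - 1) ltac:(lra)
             (fun y hy => phibar_deriv_upper i y ltac:(lra) ltac:(lia))).
    apply is_derive_left_right_iff, is_derive_hermite_deriv; (lra || lia).
  - rewrite phibar_deriv_ge2 by lra.
    apply (is_left_derive_loc _ _ x _ (x - 2) ltac:(lra) (fun y hy => phibar_deriv_ge2 i y ltac:(lra))).
    apply is_derive_left_right_iff, is_derive_const_deriv.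
Qed.

Lemma is_right_derive_phibar_deriv i x : (i <= 3)%nat -> is_right_derive (g i) x (g (S i) x).
Proof.
  intros hi.
  destruct (Rlt_le_dec x (Dl / 2)) as [h1 | h1]; [| destruct (Rlt_le_dec x Dl) as [h2 | h2]];
    [| | destruct (Rlt_le_dec x 1) as [h3 | h3]; [| destruct (Rlt_le_dec x 2) as [h4 | h4]]].
  - rewrite phibar_deriv_le_half by lra.
    apply (is_right_derive_loc _ _ x _ (Dl / 2 - x) ltac:(lra)
             (fun y hy => phibar_deriv_le_half i y ltac:(lra))).
    apply is_derive_left_right_iff, is_derive_const_deriv.
  - rewrite phibar_deriv_lower by (lra || lia).
    apply (is_right_derive_loc _ _ x _ (Dl - x) ltac:(lra)
             (fun y hy => phibar_deriv_lower i y ltac:(lra) ltac:(lia))).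
    apply is_derive_left_right_iff, is_derive_hermite_deriv; (lra || lia).
  - rewrite phibar_deriv_mid by lra.
    apply (is_right_derive_loc _ _ x _ (1 - x) ltac:(lra) (fun y hy => phibar_deriv_mid i y ltac:(lra))).
    apply is_derive_I01_right; [lra | apply phi_deriv_I01; [lia | unfold I01; lra]].
  - rewrite phibar_deriv_upper by (lra || lia).
    apply (is_right_derive_loc _ _ x _ (2 - x) ltac:(lra)
             (fun y hy => phibar_deriv_upper i y ltac:(lra) ltac:(lia))).
    apply is_derive_left_right_iff, is_derive_hermite_deriv; (lra || lia).
  - rewrite phibar_deriv_ge2 by lra.
    apply (is_right_derive_loc _ _ x _ 1 Rlt_0_1 (fun y hy => phibar_deriv_ge2 i y ltac:(lra))).
    apply is_derive_left_right_iff, is_derive_const_deriv.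
Qed.

Lemma is_derive_phibar_deriv i x : (i <= 3)%nat -> is_derive (g i) x (g (S i) x).
Proof.
  intros hi. apply is_derive_left_right_iff.
  split; [apply is_left_derive_phibar_deriv | apply is_right_derive_phibar_deriv]; exact hi.
Qed.

Lemma Derive_n_phibar x : Derive_n (phibar phi D Dl) 2 x = g 2 x.
Proof.
  assert (D1 : forall t, Derive (phibar phi D Dl) t = g 1 t).
  { intros t. apply is_derive_unique, (is_derive_ext (g 0)).
    - intros y. symmetry. apply phibar_phibar_deriv.
    - apply is_derive_phibar_deriv. lia. }
  simpl. rewrite (Derive_ext _ _ _ D1). apply is_derive_unique, is_derive_phibar_deriv. lia.
Qed.

End PhibarDerivatives.

Lemma Rpower_pos x a : 0 < Rpower x a.
Proof. apply exp_pos. Qed.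

Lemma Rpower_1_base a : Rpower 1 a = 1.
Proof. unfold Rpower. rewrite ln_1, Rmult_0_r. apply exp_0. Qed.

Lemma Rpower_le_nonpos x y a : 0 < x <= y -> a <= 0 -> Rpower y a <= Rpower x a.
Proof.
  intros hxy ha. unfold Rpower.
  assert (Hln : a * ln y <= a * ln x) by (pose proof (ln_le x y (proj1 hxy) (proj2 hxy)); nra).
  destruct (Rle_lt_or_eq_dec _ _ Hln); [left; now apply exp_increasing | right; now f_equal].
Qed.

Definition Rpower_sub (x a : R) (k : nat) : R := Rpower x a / x ^ k.

Lemma Rpower_subE x a k : 0 < x -> Rpower_sub x a k = Rpower x (a - INR k).
Proof. intros hx. unfold Rminus. now rewrite Rpower_plus, Rpower_Ropp, Rpower_pow. Qed.

Lemma Rpower_sub_pos x a k : 0 < x -> 0 < Rpower_sub x a k.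
Proof. intros hx. apply Rdiv_lt_0_compat; [apply Rpower_pos | now apply pow_lt]. Qed.

Lemma Rpower_sub_antitone x y a k : a <= INR k -> 0 < x <= y -> Rpower_sub y a k <= Rpower_sub x a k.
Proof. intros hak hxy. rewrite !Rpower_subE by lra. apply Rpower_le_nonpos; lra. Qed.

Lemma Rpower_sub_ge_1 x a k : a <= INR k -> 0 < x <= 1 -> 1 <= Rpower_sub x a k.
Proof.
  intros hak hx. pose proof (Rpower_sub_antitone x 1 a k hak hx) as H1.
  unfold Rpower_sub at 1 in H1. rewrite Rpower_1_base, pow1 in H1. lra.
Qed.

Lemma le_of_derive_nonpos (v v' : R -> R) a b : a < b ->
  (forall t, a <= t <= b -> is_derive v t (v' t)) ->
  (forall t, a < t < b -> v' t <= 0) -> v b <= v a.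
Proof.
  intros hab Hd Hn.
  destruct (MVT_cor2 v v' a b hab) as [c [Hc hc]].
  - intros t ht. now apply is_derive_Reals, Hd.
  - pose proof (Hn c hc). nra.
Qed.

(* Comparison principle: [F + U] and [F - U] are nonincreasing. *)
Lemma abs_sub_le_of_derive_le (U U' F F' : R -> R) a b : a < b ->
  (forall t, a <= t <= b -> is_derive U t (U' t)) ->
  (forall t, a <= t <= b -> is_derive F t (F' t)) ->
  (forall t, a < t < b -> Rabs (U' t) <= - F' t) ->
  Rabs (U a - U b) <= F a - F b.
Proof.
  intros hab HU HF HB.
  assert (Hp : F b + U b <= F a + U a).
  { apply (le_of_derive_nonpos (fun t => F t + U t) (fun t => F' t + U' t) a b); [lra | |].
    - intros t ht. apply (is_derive_plus F U); [apply HF | apply HU]; lra.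
    - intros t ht. pose proof (HB t ht) as B. apply Rabs_le_between in B. lra. }
  assert (Hm : F b - U b <= F a - U a).
  { apply (le_of_derive_nonpos (fun t => F t - U t) (fun t => F' t - U' t) a b); [lra | |].
    - intros t ht. apply (is_derive_minus F U); [apply HF | apply HU]; lra.
    - intros t ht. pose proof (HB t ht) as B. apply Rabs_le_between in B. lra. }
  apply Rabs_le_between. lra.
Qed.

Lemma abs_le_of_derive_le_Rpower (U U' : R -> R) K e x : 0 < x < 1 -> e < 0 -> 0 <= K ->
  (forall t, x <= t <= 1 -> is_derive U t (U' t)) ->
  (forall t, x < t < 1 -> Rabs (U' t) <= K * Rpower t (e - 1)) ->
  Rabs (U x) <= K / (- e) * Rpower x e + Rabs (U 1).
Proof.
  intros hx he hK HU HB.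
  assert (HF : forall t, x <= t <= 1 ->
    is_derive (fun y => K / (- e) * Rpower y e) t (K / (- e) * (e * Rpower t (e - 1)))).
  { intros t ht. apply (is_derive_scal (fun y => Rpower y e)).
    apply is_derive_Reals, derivable_pt_lim_power. lra. }
  pose proof (abs_sub_le_of_derive_le U U' _ _ x 1 ltac:(lra) HU HF) as Hc.
  cbv beta in Hc. rewrite Rpower_1_base in Hc.
  assert (0 <= K / - e) by (apply Rdiv_le_0_compat; lra).
  pose proof (Rabs_triang_inv (U x) (U 1)).
  enough (Rabs (U x - U 1) <= K / - e * Rpower x e - K / - e * 1) by lra.
  apply Hc. intros t ht. replace (- (K / - e * (e * Rpower t (e - 1)))) with (K * Rpower t (e - 1))
    by (field; lra). now apply HB.
Qed.

Definition pow_bounded (a : R) (k : nat) (f : R -> R) (E : R) : Prop :=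
  forall x, 0 < x <= 1 -> Rabs (f x) <= E * Rpower_sub x a k.

Lemma pow_bounded_le a k f E E' : E <= E' -> pow_bounded a k f E -> pow_bounded a k f E'.
Proof.
  intros hE Hf x hx. pose proof (Rpower_sub_pos x a k (proj1 hx)).
  apply (Rle_trans _ _ _ (Hf x hx)). now apply Rmult_le_compat_r; [lra |].
Qed.

Section DerivativeBounds.

Variables (phi : R -> R) (D : nat -> R -> R) (al : R).
Hypothesis hal : 0 < al < 1.
Hypothesis phi_deriv_I01 : forall i x, (i <= 3)%nat -> I01 x ->
  is_derive_I01 (phi_deriv phi D i) x (phi_deriv phi D (S i) x).

(* On [x, 1], [phi_deriv k] is the restriction of [phibar_deriv phi D x k], which is
   differentiable everywhere; the comparison principle then integrates the bound. *)
Lemma pow_bounded_pred k E : (1 <= k <= 3)%nat -> 0 <= E ->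
  pow_bounded al (S k) (phi_deriv phi D (S k)) E ->
  exists E', 0 <= E' /\ pow_bounded al k (phi_deriv phi D k) E'.
Proof.
  intros hk hE HS.
  assert (hk' : 1 <= INR k) by (apply (le_INR 1 k); lia).
  assert (0 <= E / (INR k - al)) by (apply Rdiv_le_0_compat; lra).
  pose proof (Rabs_pos (phi_deriv phi D k 1)).
  exists (E / (INR k - al) + Rabs (phi_deriv phi D k 1)). split; [lra |]. intros x hx.
  assert (hw : 1 <= Rpower_sub x al k) by (apply Rpower_sub_ge_1; lra).
  destruct (Req_dec x 1) as [-> | hx1].
  - unfold Rpower_sub. rewrite Rpower_1_base, pow1. lra.
  - assert (hx' : 0 < x < 1) by lra.
    pose proof (abs_le_of_derive_le_Rpower (phibar_deriv phi D x k) (phibar_deriv phi D x (S k))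
                  E (al - INR k) x hx' ltac:(lra) hE) as Hc.
    rewrite !(phibar_deriv_mid phi D x hx' k) in Hc by lra.
    replace (- (al - INR k)) with (INR k - al) in Hc by ring.
    rewrite <- Rpower_subE in Hc by lra.
    assert (Rabs (phi_deriv phi D k 1) <= Rabs (phi_deriv phi D k 1) * Rpower_sub x al k)
      by nra.
    rewrite Rmult_plus_distr_r.
    enough (Rabs (phi_deriv phi D k x)
            <= E / (INR k - al) * Rpower_sub x al k + Rabs (phi_deriv phi D k 1))
      by lra.
    apply Hc.
    + intros t ht. apply is_derive_phibar_deriv; [lra | exact phi_deriv_I01 | lia].
    + intros t ht. rewrite (phibar_deriv_mid phi D x hx') by lra.
      replace (al - INR k - 1) with (al - INR (S k)) by (rewrite S_INR; ring).
      rewrite <- Rpower_subE by lra. apply HS. lra.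
Qed.

Lemma phi_deriv_pow_bounded K c : 0 <= K ->
  (forall x, 0 < x <= 1 -> Rabs (D 4%nat x) <= K * Rpower x (al - 4) + c) ->
  exists E, 0 < E /\ forall k, (1 <= k <= 4)%nat -> pow_bounded al k (phi_deriv phi D k) E.
Proof.
  intros hK HD4.
  set (E4 := K + Rabs c).
  assert (B4 : pow_bounded al 4 (phi_deriv phi D 4) E4).
  { intros x hx. assert (hw : 1 <= Rpower_sub x al 4) by (apply Rpower_sub_ge_1; simpl; lra).
    rewrite Rpower_subE by lra. rewrite Rpower_subE in hw by lra.
    replace (INR 4) with 4 by (simpl; ring). replace (INR 4) with 4 in hw by (simpl; ring).
    pose proof (HD4 x hx). pose proof (Rle_abs c). pose proof (Rabs_pos c).
    simpl phi_deriv. unfold E4. nra. }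
  assert (hE4 : 0 <= E4) by (unfold E4; pose proof (Rabs_pos c); lra).
  destruct (pow_bounded_pred 3 E4 ltac:(lia) hE4 B4) as [E3 [hE3 B3]].
  destruct (pow_bounded_pred 2 E3 ltac:(lia) hE3 B3) as [E2 [hE2 B2]].
  destruct (pow_bounded_pred 1 E2 ltac:(lia) hE2 B2) as [E1 [hE1 B1]].
  exists (E1 + E2 + E3 + E4 + 1). split; [lra |].
  intros k hk. destruct k as [|[|[|[|[|k]]]]]; try lia.
  - apply (pow_bounded_le _ _ _ E1); [lra | exact B1].
  - apply (pow_bounded_le _ _ _ E2); [lra | exact B2].
  - apply (pow_bounded_le _ _ _ E3); [lra | exact B3].
  - apply (pow_bounded_le _ _ _ E4); [lra | exact B4].
Qed.

End DerivativeBounds.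

Definition deriv_sum (D : nat -> R -> R) (a : R) : R :=
  Rabs (D 1%nat a) + Rabs (D 2%nat a) + Rabs (D 3%nat a) + Rabs (D 4%nat a).

Lemma deriv_sum_nonneg D a : 0 <= deriv_sum D a.
Proof.
  unfold deriv_sum. pose proof (Rabs_pos (D 1%nat a)); pose proof (Rabs_pos (D 2%nat a));
  pose proof (Rabs_pos (D 3%nat a)); pose proof (Rabs_pos (D 4%nat a)). lra.
Qed.

Section PhibarDerivativeBounds.

Variables (phi : R -> R) (D : nat -> R -> R) (al Dl E : R).
Hypothesis hal : 0 < al < 1.
Hypothesis hDl : 0 < Dl < 1.
Hypothesis hE : 0 < E.
Hypothesis phi_deriv_bounded : forall k, (1 <= k <= 4)%nat -> pow_bounded al k (phi_deriv phi D k) E.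

Let g := phibar_deriv phi D Dl.

Lemma phibar_deriv_lower_bound i x : (1 <= i <= 4)%nat -> Dl / 2 <= x <= Dl ->
  Rabs (g i x) <= 64 * hermite_coef_bound * E * Rpower_sub Dl al i.
Proof.
  intros hi hx. unfold g. rewrite phibar_deriv_lower by (lra || lia).
  assert (hlen : Rabs (Dl / 2 - Dl) = Dl / 2) by (rewrite Rabs_left by lra; field).
  assert (knot : forall m, (1 <= m <= 4)%nat ->
                   Rabs (D m Dl) * Rabs (Dl / 2 - Dl) ^ m <= E * Rpower Dl al).
  { intros m hm. rewrite hlen.
    pose proof (phi_deriv_bounded m hm Dl ltac:(lra)) as HDm.
    replace (phi_deriv phi D m) with (D m) in HDm by (destruct m; [lia | reflexivity]).
    unfold Rpower_sub in HDm.
    assert ((Dl / 2) ^ m <= Dl ^ m) by (apply pow_incr; lra).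
    assert (0 < Dl ^ m) by (apply pow_lt; lra).
    pose proof (Rpower_pos Dl al). pose proof (pow_le (Dl / 2) m ltac:(lra)).
    replace (E * Rpower Dl al) with (E * (Rpower Dl al / Dl ^ m) * Dl ^ m) by (field; lra).
    apply Rmult_le_compat; [apply Rabs_pos | lra | exact HDm | lra]. }
  eapply Rle_trans; [apply hermite_deriv_bound; [lra | lia |] |].
  { replace ((x - Dl) / (Dl / 2 - Dl)) with ((Dl - x) / (Dl / 2)) by (field; lra).
    split; [apply Rdiv_le_0_compat | apply Rcomplements.Rle_div_l]; lra. }
  pose proof (knot 1%nat ltac:(lia)); pose proof (knot 2%nat ltac:(lia));
  pose proof (knot 3%nat ltac:(lia)); pose proof (knot 4%nat ltac:(lia)).
  rewrite hlen in *.
  set (S := Rabs (D 1%nat Dl) * (Dl / 2) ^ 1 + Rabs (D 2%nat Dl) * (Dl / 2) ^ 2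
            + Rabs (D 3%nat Dl) * (Dl / 2) ^ 3 + Rabs (D 4%nat Dl) * (Dl / 2) ^ 4) in *.
  assert (hS4 : S <= 4 * (E * Rpower Dl al)) by (unfold S; lra).
  assert (hS : 0 <= S).
  { unfold S. pose proof (Rabs_pos (D 1%nat Dl)); pose proof (Rabs_pos (D 2%nat Dl));
    pose proof (Rabs_pos (D 3%nat Dl)); pose proof (Rabs_pos (D 4%nat Dl)).
    assert (P : forall m, 0 <= (Dl / 2) ^ m) by (intros; apply pow_le; lra).
    pose proof (P 1%nat); pose proof (P 2%nat); pose proof (P 3%nat); pose proof (P 4%nat). nra. }
  assert (h2 : 1 <= 2 ^ i <= 16).
  { split; [apply pow_R1_Rle; lra |].
    replace 16 with (2 ^ 4) by ring. apply Rle_pow; [lra | lia]. }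
  assert (0 < Dl ^ i) by (apply pow_lt; lra). pose proof (Rpower_pos Dl al).
  unfold Rpower_sub, hermite_coef_bound.
  replace (1000000 * S / (Dl / 2) ^ i) with (1000000 * S * 2 ^ i / Dl ^ i)
    by (unfold Rdiv; rewrite Rpow_mult_distr, pow_inv; field; lra).
  replace (64 * 1000000 * E * (Rpower Dl al / Dl ^ i)) with (64 * 1000000 * E * Rpower Dl al / Dl ^ i)
    by (field; lra).
  unfold Rdiv. apply Rmult_le_compat_r; [left; now apply Rinv_0_lt_compat |].
  assert (S * 2 ^ i <= 4 * (E * Rpower Dl al) * 16) by (apply Rmult_le_compat; lra). lra.
Qed.

Lemma phibar_deriv_upper_bound i x : (1 <= i <= 4)%nat -> 1 <= x <= 2 ->
  Rabs (g i x) <= hermite_coef_bound * deriv_sum D 1.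
Proof.
  intros hi hx. unfold g. rewrite phibar_deriv_upper by (lra || lia).
  eapply Rle_trans; [apply hermite_deriv_bound; [lra | lia |] |].
  { replace ((x - 1) / (2 - 1)) with (x - 1) by field. lra. }
  replace (Rabs (2 - 1)) with 1 by (rewrite Rabs_right; lra).
  rewrite !pow1. unfold deriv_sum. right; field.
Qed.

Lemma phibar_deriv_outer i x : (1 <= i)%nat -> x <= Dl / 2 \/ 2 <= x -> g i x = 0.
Proof.
  intros hi [hx | hx]; unfold g;
    [rewrite phibar_deriv_le_half | rewrite phibar_deriv_ge2]; try lra; now destruct i; [lia |].
Qed.

Lemma phibar_deriv_bound_le_1 i x : (1 <= i <= 4)%nat -> x <= 1 ->
  Rabs (g i x) <= (64 * hermite_coef_bound + 1) * E * Rpower_sub Dl al i.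
Proof.
  intros hi hx. pose proof (Rpower_sub_pos Dl al i ltac:(lra)).
  assert (hi' : al <= INR i)
    by (assert (H1 : (1 <= i)%nat) by lia; apply le_INR in H1; simpl in H1; lra).
  unfold hermite_coef_bound in *.
  destruct (Rle_lt_dec x (Dl / 2)); [| destruct (Rle_lt_dec x Dl)].
  - rewrite phibar_deriv_outer, Rabs_R0 by (lra || lia). nra.
  - eapply Rle_trans; [apply phibar_deriv_lower_bound; (lra || lia) |].
    unfold hermite_coef_bound. nra.
  - unfold g. rewrite phibar_deriv_mid by lra.
    eapply Rle_trans; [apply phi_deriv_bounded; (lra || lia) |].
    assert (Rpower_sub x al i <= Rpower_sub Dl al i) by (apply Rpower_sub_antitone; lra). nra.
Qed.

Lemma phibar_deriv4_bound_ge p x : Dl < p <= 1 -> p / 2 <= x ->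
  Rabs (g 4 x) <= ((1024 * hermite_coef_bound + 16) * E + hermite_coef_bound * deriv_sum D 1)
                  * Rpower_sub p al 4.
Proof.
  intros hp hx.
  assert (hal4 : al <= INR 4) by (simpl; lra).
  assert (hq : 1 <= Rpower_sub p al 4) by (apply Rpower_sub_ge_1; lra).
  assert (hhalf : Rpower_sub (p / 2) al 4 <= 16 * Rpower_sub p al 4).
  { unfold Rpower_sub.
    pose proof (Rle_Rpower_l (p / 2) p al ltac:(lra) ltac:(lra)).
    replace ((p / 2) ^ 4) with (p ^ 4 / 16) by field.
    assert (0 < p ^ 4) by (apply pow_lt; lra).
    replace (Rpower (p / 2) al / (p ^ 4 / 16)) with (16 * (Rpower (p / 2) al / p ^ 4)) by (field; lra).
    apply Rmult_le_compat_l; [lra |]. unfold Rdiv.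
    apply Rmult_le_compat_r; [left; now apply Rinv_0_lt_compat | lra]. }
  pose proof (deriv_sum_nonneg D 1).
  unfold hermite_coef_bound in *.
  destruct (Rle_lt_dec x (Dl / 2)); [| destruct (Rle_lt_dec x Dl)];
    [| | destruct (Rle_lt_dec x 1); [| destruct (Rle_lt_dec x 2)]].
  - rewrite phibar_deriv_outer, Rabs_R0 by (lra || lia). nra.
  - eapply Rle_trans; [apply phibar_deriv_lower_bound; (lra || lia) |].
    assert (Rpower_sub Dl al 4 <= Rpower_sub (p / 2) al 4) by (apply Rpower_sub_antitone; lra).
    unfold hermite_coef_bound. nra.
  - unfold g. rewrite phibar_deriv_mid by lra.
    eapply Rle_trans; [apply phi_deriv_bounded; (lra || lia) |].
    assert (Rpower_sub x al 4 <= Rpower_sub (p / 2) al 4) by (apply Rpower_sub_antitone; lra). nra.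
  - eapply Rle_trans; [apply phibar_deriv_upper_bound; (lra || lia) |].
    unfold hermite_coef_bound. nra.
  - rewrite phibar_deriv_outer, Rabs_R0 by (lra || lia). nra.
Qed.

End PhibarDerivativeBounds.

Definition taylor_rem4 (G : nat -> R -> R) (p X : R) : R :=
  G 0%nat X - (G 0%nat p + G 1%nat p * (X - p) + G 2%nat p * (X - p) ^ 2 / 2
               + G 3%nat p * (X - p) ^ 3 / 6).

Definition taylor_rem2 (G : nat -> R -> R) (p X : R) : R :=
  G 2%nat X - G 2%nat p - G 3%nat p * (X - p).

Lemma abs_le_pow_succ_of_derive (h h' : R -> R) p X B k : 0 <= B ->
  (forall t, is_derive h t (h' t)) -> h p = 0 ->
  (forall t, Rmin p X <= t <= Rmax p X -> Rabs (h' t) <= B * Rabs (t - p) ^ k) ->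
  forall t, Rmin p X <= t <= Rmax p X -> Rabs (h t) <= B * Rabs (t - p) ^ S k.
Proof.
  intros hB Hd h0 Hb t ht.
  destruct (MVT_abs h h' t p) as [c [Hc hc]]; [intros; now apply is_derive_Reals |].
  rewrite h0, Rminus_0_l, Rabs_Ropp in Hc. rewrite Hc, Rabs_minus_sym.
  assert (hcX : Rmin p X <= c <= Rmax p X)
    by (unfold Rmin, Rmax in *; repeat destruct Rle_dec; lra).
  assert (Hc' : Rabs (h' c) <= B * Rabs (t - p) ^ k).
  { apply (Rle_trans _ _ _ (Hb c hcX)), Rmult_le_compat_l; [exact hB |].
    apply pow_incr. split; [apply Rabs_pos | now apply Rabs_le_between_min_max]. }
  replace (B * Rabs (t - p) ^ S k) with (B * Rabs (t - p) ^ k * Rabs (t - p)) by (simpl; ring).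
  apply Rmult_le_compat_r; [apply Rabs_pos | exact Hc'].
Qed.

Lemma Rabs_pow_even x n : Nat.even n = true -> Rabs x ^ n = x ^ n.
Proof.
  intros hn. destruct (Nat.even_spec n) as [[m ->] _]; [exact hn |].
  now rewrite !pow_mult, pow2_abs.
Qed.

Lemma taylor_rem_bounds (G : nat -> R -> R) p X B : 0 <= B ->
  (forall i t, (i <= 3)%nat -> is_derive (G i) t (G (S i) t)) ->
  (forall t, Rmin p X <= t <= Rmax p X -> Rabs (G 4%nat t) <= B) ->
  Rabs (taylor_rem4 G p X) <= B * (X - p) ^ 4 /\ Rabs (taylor_rem2 G p X) <= B * (X - p) ^ 2.
Proof.
  intros hB HG HB4.
  assert (DG : forall i t, (i <= 3)%nat ->
                 ex_derive (G i) t /\ Derive (fun x => G i x) t = G (S i) t)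
    by (intros i t hi; split; [eexists |]; [| apply is_derive_unique]; now apply HG).
  set (e3 := fun t => G 3%nat t - G 3%nat p).
  set (e2 := fun t => G 2%nat t - G 2%nat p - G 3%nat p * (t - p)).
  set (e1 := fun t => G 1%nat t - G 1%nat p - G 2%nat p * (t - p) - G 3%nat p * (t - p) ^ 2 / 2).
  set (e0 := fun t => G 0%nat t - G 0%nat p - G 1%nat p * (t - p) - G 2%nat p * (t - p) ^ 2 / 2
                     - G 3%nat p * (t - p) ^ 3 / 6).
  assert (D3 : forall t, is_derive e3 t (G 4%nat t)).
  { intros t. unfold e3. auto_derive; [apply DG; lia | rewrite (proj2 (DG 3%nat t ltac:(lia))); ring]. }
  assert (D2 : forall t, is_derive e2 t (e3 t)).
  { intros t. unfold e2.
    auto_derive; [apply DG; lia | rewrite (proj2 (DG 2%nat t ltac:(lia))); unfold e3; ring]. }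
  assert (D1 : forall t, is_derive e1 t (e2 t)).
  { intros t. unfold e1.
    auto_derive; [apply DG; lia | rewrite (proj2 (DG 1%nat t ltac:(lia))); unfold e2; field]. }
  assert (D0 : forall t, is_derive e0 t (e1 t)).
  { intros t. unfold e0.
    auto_derive; [apply DG; lia | rewrite (proj2 (DG 0%nat t ltac:(lia))); unfold e1; field]. }
  assert (B4 : forall t, Rmin p X <= t <= Rmax p X -> Rabs (G 4%nat t) <= B * Rabs (t - p) ^ 0)
    by (intros t ht; simpl; rewrite Rmult_1_r; auto).
  assert (z : p - p = 0) by ring.
  assert (B3 := abs_le_pow_succ_of_derive e3 _ p X B 0 hB D3 ltac:(unfold e3; ring) B4).
  assert (B2 := abs_le_pow_succ_of_derive e2 e3 p X B 1 hB D2 ltac:(unfold e2; rewrite z; ring) B3).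
  assert (B1 := abs_le_pow_succ_of_derive e1 e2 p X B 2 hB D1 ltac:(unfold e1; rewrite z; field) B2).
  assert (B0 := abs_le_pow_succ_of_derive e0 e1 p X B 3 hB D0 ltac:(unfold e0; rewrite z; field) B1).
  assert (hX : Rmin p X <= X <= Rmax p X) by (split; [apply Rmin_r | apply Rmax_r]).
  split.
  - specialize (B0 X hX). rewrite Rabs_pow_even in B0 by reflexivity.
    unfold taylor_rem4. unfold e0 in B0. replace (G 0%nat X - _) with
      (G 0%nat X - G 0%nat p - G 1%nat p * (X - p) - G 2%nat p * (X - p) ^ 2 / 2
       - G 3%nat p * (X - p) ^ 3 / 6) by ring. exact B0.
  - specialize (B2 X hX). rewrite Rabs_pow_even in B2 by reflexivity. exact B2.
Qed.

Lemma Rabs_mult_pow_le c Y p m : Rabs Y <= p -> Rabs (c * Y ^ m) <= Rabs c * p ^ m.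
Proof.
  intros hY. rewrite Rabs_mult, <- RPow_abs.
  apply Rmult_le_compat_l; [apply Rabs_pos | apply pow_incr; split; [apply Rabs_pos | exact hY]].
Qed.

Lemma taylor_rem_near (G : nat -> R -> R) p X a1 a2 b c :
  (forall i t, (i <= 3)%nat -> is_derive (G i) t (G (S i) t)) ->
  0 <= X <= p ->
  (forall t, t <= p -> Rabs (G 1%nat t) <= a1) ->
  (forall t, t <= p -> Rabs (G 2%nat t) <= a2) ->
  Rabs (G 1%nat p) * p <= b -> Rabs (G 2%nat p) * p ^ 2 <= b -> Rabs (G 3%nat p) * p ^ 3 <= b ->
  Rabs (G 2%nat p) <= c -> Rabs (G 3%nat p) * p <= c ->
  Rabs (taylor_rem4 G p X) <= a1 * p + 3 * b /\ Rabs (taylor_rem2 G p X) <= a2 + 2 * c.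
Proof.
  intros HG hX HB1 HB2 Hb1 Hb2 Hb3 Hc2 Hc3.
  assert (hY : Rabs (X - p) <= p) by (rewrite Rabs_left1; lra).
  assert (Hmv : Rabs (G 0%nat X - G 0%nat p) <= a1 * p).
  { destruct (MVT_abs (G 0%nat) (G 1%nat) p X) as [t [Ht ht]].
    - intros t ht. apply is_derive_Reals, HG. lia.
    - rewrite Ht. rewrite Rmin_right, Rmax_left in ht by lra.
      apply Rmult_le_compat; [apply Rabs_pos | apply Rabs_pos | apply HB1; lra | exact hY]. }
  pose proof (Rabs_mult_pow_le (G 1%nat p) _ _ 1 hY) as T1.
  pose proof (Rabs_mult_pow_le (G 2%nat p / 2) _ _ 2 hY) as T2.
  pose proof (Rabs_mult_pow_le (G 3%nat p / 6) _ _ 3 hY) as T3.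
  rewrite pow_1 in T1. rewrite Rabs_div in T2, T3 by lra.
  replace (Rabs 2) with 2 in T2 by (rewrite Rabs_right; lra).
  replace (Rabs 6) with 6 in T3 by (rewrite Rabs_right; lra).
  split.
  - unfold taylor_rem4.
    replace (G 0%nat X - _) with ((G 0%nat X - G 0%nat p) - G 1%nat p * (X - p) ^ 1
      - G 2%nat p / 2 * (X - p) ^ 2 - G 3%nat p / 6 * (X - p) ^ 3) by (simpl; field).
    rewrite pow_1.
    pose proof (Rabs_triang (G 0%nat X - G 0%nat p) (- (G 1%nat p * (X - p)))).
    pose proof (Rabs_triang (G 0%nat X - G 0%nat p - G 1%nat p * (X - p))
                  (- (G 2%nat p / 2 * (X - p) ^ 2))).
    pose proof (Rabs_triang (G 0%nat X - G 0%nat p - G 1%nat p * (X - p) - G 2%nat p / 2 * (X - p) ^ 2)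
                  (- (G 3%nat p / 6 * (X - p) ^ 3))).
    rewrite !Rabs_Ropp in *. unfold Rminus in *.
    assert (0 <= Rabs (G 2%nat p) * p ^ 2)
      by (apply Rmult_le_pos; [apply Rabs_pos | apply pow_le; lra]).
    assert (0 <= Rabs (G 3%nat p) * p ^ 3)
      by (apply Rmult_le_pos; [apply Rabs_pos | apply pow_le; lra]).
    assert (Rabs (G 2%nat p) / 2 * p ^ 2 <= b) by lra.
    assert (Rabs (G 3%nat p) / 6 * p ^ 3 <= b) by lra.
    lra.
  - unfold taylor_rem2.
    pose proof (HB2 X ltac:(lra)). pose proof (Rabs_mult_pow_le (G 3%nat p) _ _ 1 hY) as T4.
    rewrite !pow_1 in T4.
    pose proof (Rabs_triang (G 2%nat X - G 2%nat p) (- (G 3%nat p * (X - p)))).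
    pose proof (Rabs_triang (G 2%nat X) (- G 2%nat p)).
    rewrite !Rabs_Ropp in *. unfold Rminus in *. lra.
Qed.

(* Far from 0 the Taylor remainders are controlled by [G 4] near [p]; close to 0,
   where [G 4] may blow up, crude bounds suffice because then [|X - p| >= p / 2]. *)
Lemma estimator_rem_bound (G : nat -> R -> R) p N X Bq a1 a2 b c :
  (forall i t, (i <= 3)%nat -> is_derive (G i) t (G (S i) t)) ->
  0 < p -> 0 < N -> 0 <= X -> 0 <= Bq -> 0 <= a1 -> 0 <= a2 -> 0 <= b -> 0 <= c ->
  (forall t, p / 2 <= t -> Rabs (G 4%nat t) <= Bq) ->
  (forall t, t <= p -> Rabs (G 1%nat t) <= a1) ->
  (forall t, t <= p -> Rabs (G 2%nat t) <= a2) ->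
  Rabs (G 1%nat p) * p <= b -> Rabs (G 2%nat p) * p ^ 2 <= b -> Rabs (G 3%nat p) * p ^ 3 <= b ->
  Rabs (G 2%nat p) <= c -> Rabs (G 3%nat p) * p <= c ->
  Rabs (taylor_rem4 G p X - X / (2 * N) * taylor_rem2 G p X)
  <= (Bq + 16 * (a1 * p + 3 * b) / p ^ 4 + 4 * (a2 + 2 * c) / (N * p ^ 3)) * (X - p) ^ 4
     + Bq / (2 * N) * X * (X - p) ^ 2.
Proof.
  intros HG hp hN hX hBq ha1 ha2 hb hc HB4 HB1 HB2 Hb1 Hb2 Hb3 Hc2 Hc3.
  assert (hY4 : 0 <= (X - p) ^ 4) by (rewrite <- Rabs_pow_even by reflexivity; apply pow_le, Rabs_pos).
  assert (hY2 : 0 <= (X - p) ^ 2) by apply pow2_ge_0.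
  assert (hp3 : 0 < p ^ 3) by (apply pow_lt; lra).
  assert (hp4 : 0 < p ^ 4) by (apply pow_lt; lra).
  assert (T1 : 0 <= 16 * (a1 * p + 3 * b) / p ^ 4 * (X - p) ^ 4)
    by (apply Rmult_le_pos; [apply Rdiv_le_0_compat; nra |]; lra).
  assert (T2 : 0 <= 4 * (a2 + 2 * c) / (N * p ^ 3) * (X - p) ^ 4)
    by (apply Rmult_le_pos; [apply Rdiv_le_0_compat; nra |]; lra).
  assert (T3 : 0 <= Bq / (2 * N) * X * (X - p) ^ 2)
    by (apply Rmult_le_pos; [apply Rmult_le_pos; [apply Rdiv_le_0_compat |] |]; lra).
  assert (hXN : 0 <= X / (2 * N)) by (apply Rdiv_le_0_compat; lra).
  eapply Rle_trans; [apply Rabs_triang |].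
  rewrite Rabs_Ropp, Rabs_mult, (Rabs_pos_eq (X / (2 * N))) by lra.
  destruct (Rle_lt_dec (p / 2) X) as [hfar | hnear].
  - destruct (taylor_rem_bounds G p X Bq hBq HG) as [A4 A2].
    { intros t ht. apply HB4. pose proof (Rmin_glb p X (p / 2) ltac:(lra) hfar). lra. }
    assert (X / (2 * N) * Rabs (taylor_rem2 G p X) <= Bq / (2 * N) * X * (X - p) ^ 2).
    { replace (Bq / (2 * N) * X * (X - p) ^ 2) with (X / (2 * N) * (Bq * (X - p) ^ 2)) by (field; lra).
      now apply Rmult_le_compat_l. }
    nra.
  - destruct (taylor_rem_near G p X a1 a2 b c HG ltac:(lra) HB1 HB2 Hb1 Hb2 Hb3 Hc2 Hc3) as [A4 A2].
    assert (hone : 1 <= 16 * (X - p) ^ 4 / p ^ 4).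
    { assert ((p / 2) ^ 4 <= (p - X) ^ 4) by (apply pow_incr; lra).
      replace ((p - X) ^ 4) with ((X - p) ^ 4) in H by ring.
      apply Rcomplements.Rle_div_r; [exact hp4 |]. lra. }
    assert (X / (2 * N) * Rabs (taylor_rem2 G p X) <= 4 * (a2 + 2 * c) / (N * p ^ 3) * (X - p) ^ 4).
    { replace (4 * (a2 + 2 * c) / (N * p ^ 3) * (X - p) ^ 4)
        with (p / (4 * N) * (a2 + 2 * c) * (16 * (X - p) ^ 4 / p ^ 4)) by (field; lra).
      assert (X / (2 * N) <= p / (4 * N)) by (apply Rcomplements.Rle_div_l; [lra |];
        replace (p / (4 * N) * (2 * N)) with (p / 2) by (field; lra); lra).
      assert (0 <= p / (4 * N) * (a2 + 2 * c)) by (apply Rmult_le_pos; [apply Rdiv_le_0_compat |]; lra).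
      pose proof (Rabs_pos (taylor_rem2 G p X)).
      apply (Rle_trans _ (p / (4 * N) * (a2 + 2 * c))); [apply Rmult_le_compat; lra | nra]. }
    assert (Rabs (taylor_rem4 G p X) <= 16 * (a1 * p + 3 * b) / p ^ 4 * (X - p) ^ 4).
    { replace (16 * (a1 * p + 3 * b) / p ^ 4 * (X - p) ^ 4)
        with ((a1 * p + 3 * b) * (16 * (X - p) ^ 4 / p ^ 4)) by (field; lra). nra. }
    nra.
Qed.

(* [estimator_err] minus the Taylor remainders at [X = k / N], as a polynomial in
   [y = k - N p = N (X - p)]. *)
Definition estimator_cubic (G : nat -> R -> R) (N p y : R) : R :=
  - G 2%nat p * p / (2 * N)
  + (G 1%nat p / N - G 2%nat p / (2 * N ^ 2) - G 3%nat p * p / (2 * N ^ 2)) * y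
  + (G 2%nat p / (2 * N ^ 2) - G 3%nat p / (2 * N ^ 3)) * y ^ 2
  + G 3%nat p / (6 * N ^ 3) * y ^ 3.

Lemma is_series_poisson_estimator_cubic G N p : 0 < N ->
  is_series (fun k => poisson_pmf (N * p) k * estimator_cubic G N p (INR k - N * p))
    (- (G 3%nat p * p / (3 * N ^ 2))).
Proof.
  intros hN. unfold estimator_cubic.
  set (b0 := - G 2%nat p * p / (2 * N)).
  set (b1 := G 1%nat p / N - G 2%nat p / (2 * N ^ 2) - G 3%nat p * p / (2 * N ^ 2)).
  set (b2 := G 2%nat p / (2 * N ^ 2) - G 3%nat p / (2 * N ^ 3)).
  set (b3 := G 3%nat p / (6 * N ^ 3)).
  pose proof (is_series_poisson_central (N * p) b0 b1 b2 b3 0) as H.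
  replace (- (G 3%nat p * p / (3 * N ^ 2)))
    with (b0 + b2 * (N * p) + b3 * (N * p) + 0 * (3 * (N * p) ^ 2 + N * p))
    by (unfold b0, b2, b3; field; lra).
  refine (is_series_ext _ _ _ _ H). intros k. simpl. ring.
Qed.

Lemma is_series_poisson_rem_bound N p A B : 0 < N ->
  is_series (fun k => poisson_pmf (N * p) k *
    (A * (INR k / N - p) ^ 4 + B * (INR k / N) * (INR k / N - p) ^ 2))
    (A * (3 * p ^ 2 / N ^ 2 + p / N ^ 3) + B * (p ^ 2 / N + p / N ^ 2)).
Proof.
  intros hN.
  pose proof (is_series_poisson_central (N * p) 0 0 (B * p / N ^ 2) (B / N ^ 3) (A / N ^ 4)) as H.
  replace (A * (3 * p ^ 2 / N ^ 2 + p / N ^ 3) + B * (p ^ 2 / N + p / N ^ 2))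
    with (0 + B * p / N ^ 2 * (N * p) + B / N ^ 3 * (N * p) + A / N ^ 4 * (3 * (N * p) ^ 2 + N * p))
    by (field; lra).
  refine (is_series_ext _ _ _ _ H). intros k. simpl. field. lra.
Qed.

Definition bias_constant (E K1 K4 c0 : R) : R :=
  E + K4 * (1 + / c0) + K4 * (3 + / c0) + 16 * (K1 + 3 * E) * (3 + / c0)
  + 4 * (K1 + 2 * E) * (3 * / c0 + (/ c0) ^ 2).

Lemma bias_terms_le N p Dl c0 E K1 K4 d q g3 :
  0 < N -> 0 < Dl < p -> 0 < c0 <= N * p -> 0 <= E -> 0 <= K1 -> 0 <= K4 ->
  0 <= q <= d -> Rabs g3 <= E * q / p ->
  let Bq := K4 * q / p ^ 2 in
  let A := Bq + 16 * (K1 * d * Dl * p + 3 * (E * q * p ^ 2)) / p ^ 4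
           + 4 * (K1 * d + 2 * (E * q)) / (N * p ^ 3) in
  Rabs (g3 * p / (3 * N ^ 2)) + (A * (3 * p ^ 2 / N ^ 2 + p / N ^ 3)
                                 + Bq / (2 * N) * (p ^ 2 / N + p / N ^ 2))
  <= bias_constant E K1 K4 c0 * (d / N ^ 2).
Proof.
  intros hN hDl hc0 hE hG1 hG4 hqd hg3 Bq A.
  assert (hp : 0 < p) by lra.
  assert (hN2 : 0 < N ^ 2) by (apply pow_lt; lra).
  set (w := / (N * p)). set (iw := / c0). set (s := Dl / p).
  assert (hw : 0 <= w <= iw)
    by (split; [left; apply Rinv_0_lt_compat; nra | apply Rinv_le_contravar; lra]).
  assert (hs : 0 <= s <= 1)
    by (split; [apply Rdiv_le_0_compat | apply Rcomplements.Rle_div_l]; lra).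
  assert (T0 : Rabs (g3 * p / (3 * N ^ 2)) <= E * d / N ^ 2).
  { rewrite Rabs_div, Rabs_mult, (Rabs_pos_eq p), (Rabs_pos_eq (3 * N ^ 2)) by lra.
    apply Rcomplements.Rle_div_l; [lra |].
    replace (E * d / N ^ 2 * (3 * N ^ 2)) with (3 * (E * d)) by (field; lra).
    assert (Rabs g3 * p <= E * q) by (apply Rcomplements.Rle_div_r in hg3; lra).
    nra. }
  assert (Erest : A * (3 * p ^ 2 / N ^ 2 + p / N ^ 3) + Bq / (2 * N) * (p ^ 2 / N + p / N ^ 2)
     = (K4 * q * (1 + w) / 2 + K4 * q * (3 + w) + 16 * (K1 * d * s + 3 * E * q) * (3 + w)
        + 4 * (K1 * d + 2 * E * q) * (3 * w + w ^ 2)) / N ^ 2)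
    by (unfold A, Bq, w, s; field; lra).
  assert (T1 : K4 * q * (1 + w) / 2 <= K4 * (1 + iw) * d).
  { assert (q * (1 + w) <= d * (1 + iw)) by (apply Rmult_le_compat; lra).
    assert (K4 * (q * (1 + w)) <= K4 * (d * (1 + iw))) by (apply Rmult_le_compat_l; lra).
    assert (0 <= K4 * (q * (1 + w))) by (apply Rmult_le_pos; nra). lra. }
  assert (T2 : K4 * q * (3 + w) <= K4 * (3 + iw) * d).
  { assert (q * (3 + w) <= d * (3 + iw)) by (apply Rmult_le_compat; lra).
    assert (K4 * (q * (3 + w)) <= K4 * (d * (3 + iw))) by (apply Rmult_le_compat_l; lra). lra. }
  assert (T3 : 16 * (K1 * d * s + 3 * E * q) * (3 + w) <= 16 * (K1 + 3 * E) * (3 + iw) * d).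
  { assert (K1 * d * s <= K1 * d) by (assert (0 <= K1 * d) by nra; nra).
    assert (0 <= K1 * d * s) by (assert (0 <= K1 * d) by nra; nra).
    assert ((K1 * d * s + 3 * E * q) * (3 + w) <= (K1 + 3 * E) * d * (3 + iw))
      by (apply Rmult_le_compat; nra). nra. }
  assert (T4 : 4 * (K1 * d + 2 * E * q) * (3 * w + w ^ 2)
               <= 4 * (K1 + 2 * E) * (3 * iw + iw ^ 2) * d).
  { assert (w ^ 2 <= iw ^ 2) by (apply pow_incr; lra).
    assert ((K1 * d + 2 * E * q) * (3 * w + w ^ 2) <= (K1 + 2 * E) * d * (3 * iw + iw ^ 2))
      by (apply Rmult_le_compat; nra). nra. }
  rewrite Erest. unfold bias_constant. fold iw.
  apply (Rle_trans _ (E * d / N ^ 2 + (K4 * (1 + iw) * d + K4 * (3 + iw) * d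
      + 16 * (K1 + 3 * E) * (3 + iw) * d + 4 * (K1 + 2 * E) * (3 * iw + iw ^ 2) * d) / N ^ 2)).
  - apply Rplus_le_compat; [exact T0 |]. unfold Rdiv.
    apply Rmult_le_compat_r; [left; now apply Rinv_0_lt_compat | lra].
  - right. field. lra.
Qed.

Section EstimatorBias.

Variables (phi : R -> R) (D : nat -> R -> R) (al E c0 : R).
Hypothesis hal : 0 < al < 1.
Hypothesis hE : 0 < E.
Hypothesis hc0 : 0 < c0.
Hypothesis phi_deriv_I01 : forall i x, (i <= 3)%nat -> I01 x ->
  is_derive_I01 (phi_deriv phi D i) x (phi_deriv phi D (S i) x).
Hypothesis phi_deriv_bounded : forall k, (1 <= k <= 4)%nat -> pow_bounded al k (phi_deriv phi D k) E.

Let K1 := (64 * hermite_coef_bound + 1) * E.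
Let K4 := (1024 * hermite_coef_bound + 16) * E + hermite_coef_bound * deriv_sum D 1.

Lemma K1_nonneg : 0 <= K1.
Proof. unfold K1, hermite_coef_bound. nra. Qed.

Lemma K4_nonneg : 0 <= K4.
Proof.
  unfold K4, hermite_coef_bound. pose proof (deriv_sum_nonneg D 1). nra.
Qed.

Lemma phibar_rem_bound N Dl p X : 0 < N -> 0 < Dl < p -> p <= 1 -> 0 <= X ->
  Rabs (taylor_rem4 (phibar_deriv phi D Dl) p X
        - X / (2 * N) * taylor_rem2 (phibar_deriv phi D Dl) p X)
  <= (K4 * Rpower_sub p al 2 / p ^ 2
      + 16 * (K1 * Rpower_sub Dl al 2 * Dl * p + 3 * (E * Rpower_sub p al 2 * p ^ 2)) / p ^ 4
      + 4 * (K1 * Rpower_sub Dl al 2 + 2 * (E * Rpower_sub p al 2)) / (N * p ^ 3)) * (X - p) ^ 4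
     + K4 * Rpower_sub p al 2 / p ^ 2 / (2 * N) * X * (X - p) ^ 2.
Proof.
  intros hN hDl hp1 hX.
  assert (hp : 0 < p) by lra.
  set (q := Rpower_sub p al 2). set (d := Rpower_sub Dl al 2).
  assert (hq : 0 < q) by (apply Rpower_sub_pos; lra).
  assert (hd : 0 < d) by (apply Rpower_sub_pos; lra).
  assert (Q1 : Rpower_sub p al 1 = q * p) by (unfold q, Rpower_sub; field; lra).
  assert (Q3 : Rpower_sub p al 3 = q / p) by (unfold q, Rpower_sub; field; lra).
  assert (Q4 : Rpower_sub p al 4 = q / p ^ 2) by (unfold q, Rpower_sub; field; lra).
  assert (D1 : Rpower_sub Dl al 1 = d * Dl) by (unfold d, Rpower_sub; field; lra).
  assert (at_p : forall k, (1 <= k <= 4)%nat ->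
            Rabs (phibar_deriv phi D Dl k p) <= E * Rpower_sub p al k).
  { intros k hk. rewrite phibar_deriv_mid by lra. apply phi_deriv_bounded; lra || lia. }
  pose proof (at_p 1%nat ltac:(lia)) as g1; pose proof (at_p 2%nat ltac:(lia)) as g2;
  pose proof (at_p 3%nat ltac:(lia)) as g3. rewrite Q1 in g1. rewrite Q3 in g3. fold q in g2.
  pose proof K1_nonneg; pose proof K4_nonneg.
  assert (Hg1 : Rabs (phibar_deriv phi D Dl 1 p) * p <= E * q * p ^ 2).
  { replace (E * q * p ^ 2) with (E * (q * p) * p) by ring. apply Rmult_le_compat_r; lra. }
  assert (Hg2 : Rabs (phibar_deriv phi D Dl 2 p) * p ^ 2 <= E * q * p ^ 2)
    by (apply Rmult_le_compat_r; [apply pow_le | ]; lra).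
  assert (Hg3 : Rabs (phibar_deriv phi D Dl 3 p) * p ^ 3 <= E * q * p ^ 2).
  { replace (E * q * p ^ 2) with (E * (q / p) * p ^ 3) by (field; lra).
    apply Rmult_le_compat_r; [apply pow_le |]; lra. }
  assert (Hg3' : Rabs (phibar_deriv phi D Dl 3 p) * p <= E * q).
  { replace (E * q) with (E * (q / p) * p) by (field; lra). apply Rmult_le_compat_r; lra. }
  apply estimator_rem_bound; try assumption.
  - intros; apply is_derive_phibar_deriv; assumption || lra.
  - apply Rdiv_le_0_compat; [nra | apply pow_lt; lra].
  - apply Rmult_le_pos; nra.
  - nra.
  - apply Rmult_le_pos; [nra | apply pow_le; lra].
  - nra.
  - intros t ht. unfold Rdiv. rewrite Rmult_assoc. fold (q / p ^ 2). rewrite <- Q4.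
    apply phibar_deriv4_bound_ge; assumption || lra.
  - intros t ht. rewrite Rmult_assoc, <- D1.
    apply phibar_deriv_bound_le_1; assumption || lia || lra.
  - intros t ht. apply phibar_deriv_bound_le_1; assumption || lia || lra.
Qed.

Lemma estimator_err_taylor n Dl p k : 0 < INR n -> 0 < Dl < p -> p <= 1 ->
  estimator_err phi D n Dl p k
  = taylor_rem4 (phibar_deriv phi D Dl) p (INR k / INR n)
    - INR k / INR n / (2 * INR n) * taylor_rem2 (phibar_deriv phi D Dl) p (INR k / INR n)
    + estimator_cubic (phibar_deriv phi D Dl) (INR n) p (INR k - INR n * p).
Proof.
  intros hN hDl hp1. assert (hDl1 : 0 < Dl < 1) by lra.
  unfold estimator_err. change (phi p) with (phi_deriv phi D 0 p).
  rewrite (phibar_phibar_deriv phi D Dl hDl1), (Derive_n_phibar phi D Dl hDl1 phi_deriv_I01),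
    <- (phibar_deriv_mid phi D Dl hDl1 0 p) by lra.
  unfold taylor_rem4, taylor_rem2, estimator_cubic. field. lra.
Qed.

Lemma estimator_bias_le n Dl p : (1 <= n)%nat -> 0 < Dl -> c0 / INR n <= Dl -> Dl < p -> p <= 1 ->
  ex_series (fun k => poisson_pmf (INR n * p) k * estimator_err phi D n Dl p k) /\
  Rabs (Series (fun k => poisson_pmf (INR n * p) k * estimator_err phi D n Dl p k))
  <= bias_constant E K1 K4 c0 * (Rpower_sub Dl al 2 / INR n ^ 2).
Proof.
  intros hn hDl hc0n hDp hp1.
  set (N := INR n) in *. set (G := phibar_deriv phi D Dl).
  assert (hN : 1 <= N) by (apply (le_INR 1) in hn; unfold N; simpl in hn; lra).
  assert (hlam : c0 <= N * p) by (apply Rcomplements.Rle_div_l in hc0n; nra).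
  set (q := Rpower_sub p al 2). set (d := Rpower_sub Dl al 2).
  set (Bq := K4 * q / p ^ 2).
  set (A := Bq + 16 * (K1 * d * Dl * p + 3 * (E * q * p ^ 2)) / p ^ 4
            + 4 * (K1 * d + 2 * (E * q)) / (N * p ^ 3)).
  destruct (series_approx_bound (poisson_pmf (N * p)) (estimator_err phi D n Dl p)
     (fun k => estimator_cubic G N p (INR k - N * p))
     (fun k => A * (INR k / N - p) ^ 4 + Bq / (2 * N) * (INR k / N) * (INR k / N - p) ^ 2) _ _
     ltac:(intros; apply poisson_pmf_nonneg; nra)
     (is_series_poisson_estimator_cubic G N p ltac:(lra))
     (is_series_poisson_rem_bound N p A (Bq / (2 * N)) ltac:(lra)))
    as [Hex Hle].
  - intros k. rewrite estimator_err_taylor by (fold N; lra). fold N G.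
    replace (_ + estimator_cubic G N p (INR k - N * p) - _)
      with (taylor_rem4 G p (INR k / N) - INR k / N / (2 * N) * taylor_rem2 G p (INR k / N))
      by ring.
    apply phibar_rem_bound; try lra. apply Rdiv_le_0_compat; [apply pos_INR | lra].
  - split; [exact Hex |]. apply (Rle_trans _ _ _ Hle). rewrite Rabs_Ropp.
    apply bias_terms_le; try lra.
    + apply K1_nonneg.
    + apply K4_nonneg.
    + split; [left; apply Rpower_sub_pos | apply Rpower_sub_antitone; simpl]; lra.
    + unfold G. rewrite phibar_deriv_mid by lra.
      replace (E * q / p) with (E * Rpower_sub p al 3) by (unfold q, Rpower_sub; field; lra).
      apply phi_deriv_bounded; lia || lra.
Qed.

Lemma estimator_bias_uniform : exists C, 0 < C /\ forall n Dl p,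
  (1 <= n)%nat -> 0 < Dl -> c0 / INR n <= Dl -> Dl < p -> p <= 1 ->
  ex_series (fun k => poisson_pmf (INR n * p) k * estimator_err phi D n Dl p k) /\
  Rabs (Series (fun k => poisson_pmf (INR n * p) k * estimator_err phi D n Dl p k))
  <= C * (Rpower_sub Dl al 2 / INR n ^ 2).
Proof.
  exists (bias_constant E K1 K4 c0). split; [| exact estimator_bias_le].
  pose proof K1_nonneg; pose proof K4_nonneg.
  assert (0 < / c0) by now apply Rinv_0_lt_compat.
  unfold bias_constant. nra.
Qed.

End EstimatorBias.

Lemma phi_deriv_I01_of_C4 phi D : C4_derivs_I01 phi D ->
  forall i x, (i <= 3)%nat -> I01 x -> is_derive_I01 (phi_deriv phi D i) x (phi_deriv phi D (S i) x).
Proof.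
  intros [H1 [H2 _]] i x hi hx.
  destruct i as [|i]; [now apply H1 | apply H2; [lia | exact hx]].
Qed.

Lemma Rpower_sub_2 x a : 0 < x -> Rpower_sub x a 2 = 1 / Rpower x (2 - a).
Proof.
  intros hx. rewrite Rpower_subE by exact hx.
  replace (a - INR 2) with (- (2 - a)) by (simpl; ring). rewrite Rpower_Ropp. field.
  apply Rgt_not_eq, Rpower_pos.
Qed.

Theorem lemma6 :
  forall (alpha : R) (phi : R -> R) (D : nat -> R -> R) (W c c' : R),
    0 < alpha < 1 ->
    (forall x, 0 <= x <= 1 -> 0 <= phi x) ->
    C4_derivs_I01 phi D ->
    0 < W ->
    (forall x, 0 < x <= 1 ->
       (2 - alpha) * (3 - alpha) * (4 - alpha) * W * Rpower x (alpha - 4) + c'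
         <= Rabs (D 4%nat x) /\
       Rabs (D 4%nat x)
         <= (2 - alpha) * (3 - alpha) * (4 - alpha) * W * Rpower x (alpha - 4) + c) ->
    forall c0 : R, 0 < c0 ->
    exists C : R, 0 < C /\
      forall (n : nat) (Delta p : R),
        (1 <= n)%nat ->
        0 < Delta <= 1 ->
        c0 / INR n <= Delta ->
        Delta < p -> p <= 1 ->
        ex_series (fun k => poisson_pmf (INR n * p) k * estimator_err phi D n Delta p k) /\
        Rabs (Series (fun k => poisson_pmf (INR n * p) k * estimator_err phi D n Delta p k))
          <= C * (1 / (INR n ^ 2 * Rpower Delta (2 - alpha)) + p / INR n ^ 2).
Proof.
  intros al phi D W c c' hal _ HC4 hW HD4 c0 hc0.
  pose proof (phi_deriv_I01_of_C4 phi D HC4) as HI01.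
  assert (hK : 0 <= (2 - al) * (3 - al) * (4 - al) * W) by (repeat apply Rmult_le_pos; lra).
  destruct (phi_deriv_pow_bounded phi D al hal HI01 _ c hK (fun x hx => proj2 (HD4 x hx)))
    as [E [hE HE]].
  destruct (estimator_bias_uniform phi D al E c0 hal hE hc0 HI01 HE) as [C [hC HC]].
  exists C. split; [exact hC |].
  intros n Dl p hn hDl hc0n hDp hp1.
  destruct (HC n Dl p hn (proj1 hDl) hc0n hDp hp1) as [Hex Hle].
  split; [exact Hex |]. apply (Rle_trans _ _ _ Hle), Rmult_le_compat_l; [lra |].
  assert (hn0 : 0 < INR n) by (apply lt_0_INR; lia).
  pose proof (Rpower_pos Dl (2 - al)).
  rewrite Rpower_sub_2 by lra.
  replace (1 / Rpower Dl (2 - al) / INR n ^ 2) with (1 / (INR n ^ 2 * Rpower Dl (2 - al)))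
    by (field; lra).
  assert (0 <= p / INR n ^ 2) by (apply Rdiv_le_0_compat; [lra | apply pow_lt; lra]). lra.
Qed.
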